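(* Let $\mathcal{H}$ be a finite-dimensional Hilbert space. Every connected spanning set of pure states in $\mathcal{H}$ contains a subset that is a connected basis of $\mathcal{H}$. Every set of pure states in $\mathcal{H}$ that contains a connected spanning subset is itself a connected spanning set.
   Context: The transition graph of a set $\{|\psi_j\rangle\}$ of pure states has vertices the states, with two distinct vertices adjacent iff their inner product is nonzero; the set is connected if this graph is connected. A connected spanning set is a connected set spanning $\mathcal{H}$; a connected basis is a connected set that is a basis of $\mathcal{H}$. *)

(* H = C^n with C an algebraically closed numeric field
   (e.g. algC, or the complex numbers), standard inner product. *)
From HB Require Import structures.
From mathcomp Require Import all_boot all_order all_algebra.
From Stdlib Require Import Relations.
Set Implicit Arguments. Unset Strict Implicit. Unset Printing Implicit Defensive.
Import Order.TTheory GRing.Theory Num.Theory.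
Local Open Scope ring_scope.

Section Defs.
Variables (C : numClosedFieldType) (n : nat).
Notation vec := 'rV[C]_n.

Definition inner (u v : vec) : C := \sum_(i < n) (u 0 i)^* * v 0 i.

Definition pure_state (v : vec) : Prop := inner v v = 1.

Definition transition_edge (S : vec -> Prop) (u v : vec) : Prop :=
  S u /\ S v /\ u <> v /\ inner u v <> 0.

Definition connected_set (S : vec -> Prop) : Prop :=
  forall u v, S u -> S v -> clos_refl_trans vec (transition_edge S) u v.

Definition spans (S : vec -> Prop) : Prop :=
  forall w : vec, exists k (f : 'I_k -> vec) (a : 'I_k -> C),
    (forall i, S (f i)) /\ w = \sum_(i < k) a i *: f i.

Definition lin_indep (S : vec -> Prop) : Prop :=
  forall k (f : 'I_k -> vec) (a : 'I_k -> C),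
    injective f -> (forall i, S (f i)) ->
    \sum_(i < k) a i *: f i = 0 -> forall i, a i = 0.

Definition is_basis (S : vec -> Prop) : Prop := lin_indep S /\ spans S.

Definition set_of_pure_states (S : vec -> Prop) : Prop :=
  forall v, S v -> pure_state v.

Definition connected_spanning_set (S : vec -> Prop) : Prop :=
  set_of_pure_states S /\ connected_set S /\ spans S.

Definition connected_basis (S : vec -> Prop) : Prop :=
  set_of_pure_states S /\ connected_set S /\ is_basis S.

End Defs.

From mathcomp Require Import all_boot all_order all_algebra.
From Stdlib Require Import Relations.
Set Implicit Arguments. Unset Strict Implicit. Unset Printing Implicit Defensive.
Import Order.TTheory GRing.Theory Num.Theory.
Local Open Scope ring_scope.

(* A connected basis inside a connected spanning set S is grown one vector at
   a time.  While the span W of the free connected family built so far is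
   proper, some vector of S lies outside W; a path of the transition graph of
   S from the family to that vector leaves W at a vertex z adjacent to a
   vector of W, hence (expanding in the family) to a member of the family, and
   adding z keeps the family free and connected.
   For the second claim, a pure state x expands over a spanning subset T, so
   1 = <x|x> forces x to be equal or adjacent to some element of T, and
   connectivity of T propagates to the superset. *)

Lemma sum_neq0_exists (V : nmodType) k (F : 'I_k -> V) :
  \sum_i F i != 0 -> exists i, F i != 0.
Proof.
move=> sum_neq0; case: (pickP (fun i => F i != 0)) => [i Fi | F0].
  by exists i.
by move: sum_neq0; rewrite big1 ?eqxx // => i _; apply/eqP/negbFE/F0.
Qed.

Lemma uniq_sub_free (K : fieldType) (vT : vectType K) (X Y : seq vT) :
  free Y -> uniq X -> {subset X <= Y} -> free X.
Proof.
move=> freeY uniqX XY.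
have /perm_free -> : perm_eq X [seq y <- Y | y \in X].
  apply: uniq_perm => [//|| x]; first exact: filter_uniq (free_uniq freeY).
  by rewrite mem_filter; case xX: (x \in X) => //=; rewrite XY.
exact: filter_free.
Qed.

Section ConnectedBasis.
Variables (C : numClosedFieldType) (n : nat).
Notation vec := 'rV[C]_n.
Notation reachable S := (clos_refl_trans vec (transition_edge S)).

Lemma inner_conjC (u v : vec) : inner v u = (inner u v)^*.
Proof.
rewrite /inner rmorph_sum; apply: eq_bigr => i _.
by rewrite rmorphM /= conjCK mulrC.
Qed.

Lemma inner_eq0C (u v : vec) : (inner v u == 0) = (inner u v == 0).
Proof. by rewrite inner_conjC conjC_eq0. Qed.

Lemma inner_suml k (a : 'I_k -> C) (f : 'I_k -> vec) y :
  inner (\sum_i a i *: f i) y = \sum_i (a i)^* * inner (f i) y.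
Proof.
rewrite /inner.
under eq_bigr => j _ do rewrite summxE rmorph_sum mulr_suml.
rewrite exchange_big /=; apply: eq_bigr => i _; rewrite mulr_sumr.
by apply: eq_bigr => j _; rewrite mxE rmorphM mulrA.
Qed.

Lemma inner_sum_neq0 k (a : 'I_k -> C) (f : 'I_k -> vec) y :
  inner (\sum_i a i *: f i) y != 0 -> exists i, inner (f i) y != 0.
Proof.
rewrite inner_suml => /sum_neq0_exists [i]; rewrite mulf_eq0 negb_or.
by case/andP=> _; exists i.
Qed.

Lemma transition_edge_sym S (u v : vec) :
  transition_edge S u v -> transition_edge S v u.
Proof.
move=> [Su [Sv [uv uv_neq0]]]; do !split => //; first by move/esym.
by apply/eqP; rewrite inner_eq0C; apply/eqP.
Qed.

Lemma reachable_sym S (u v : vec) : reachable S u v -> reachable S v u.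
Proof.
elim=> [x y /transition_edge_sym xy | x | x y z _ xy _ yz].
- exact: rt_step.
- exact: rt_refl.
- exact: rt_trans yz xy.
Qed.

Lemma reachable_sub (S S' : vec -> Prop) u v :
  (forall x, S x -> S' x) -> reachable S u v -> reachable S' u v.
Proof.
move=> SS'; elim=> [x y [Sx [Sy xy]] | x | x y z _ xy _ yz].
- by apply: rt_step; split; [exact: SS' | split; [exact: SS' |]].
- exact: rt_refl.
- exact: rt_trans xy yz.
Qed.

Lemma reachable_escape S (bs : seq vec) x y :
  reachable S x y -> x \in <<bs>>%VS -> y \notin <<bs>>%VS ->
  exists z, [/\ S z, z \notin <<bs>>%VS & exists2 b, b \in bs & inner b z != 0].
Proof.
move=> /(@clos_rt_rt1n _ _ x y).
elim=> [x0 -> // | x0 x1 y0 [_ [Sx1 [_ x01]]] _ IH x0_in y0_out].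
have [x1_in | x1_out] := boolP (x1 \in <<bs>>%VS); first exact: IH.
exists x1; split=> //.
move: x01; rewrite (@coord_span _ _ _ (in_tuple bs) _ x0_in).
move=> /eqP /inner_sum_neq0 [i bs_i].
by exists bs`_i; rewrite ?mem_nth.
Qed.

Lemma connected_set_cons (bs : seq vec) z b :
  connected_set (fun v => v \in bs) -> b \in bs -> z <> b -> inner b z != 0 ->
  connected_set (fun v => v \in z :: bs).
Proof.
move=> conn_bs b_in zb bz.
have bz_edge : transition_edge (fun v => v \in z :: bs) b z.
  do !split; rewrite ?mem_head ?in_cons ?b_in ?orbT //.
    by move/esym.
  exact/eqP.
have in_bs u v : u \in bs -> v \in bs -> reachable (fun v => v \in z :: bs) u v.
  move=> u_in v_in; apply: reachable_sub (conn_bs u v u_in v_in) => w w_in.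
  by rewrite in_cons w_in orbT.
move=> u v; rewrite !in_cons => /predU1P [-> | u_in] /predU1P [-> | v_in].
- exact: rt_refl.
- apply: rt_trans (in_bs _ _ b_in v_in).
  exact/rt_step/transition_edge_sym.
- by apply: rt_trans (in_bs _ _ u_in b_in) _; apply: rt_step.
- exact: in_bs.
Qed.

Lemma dimv_full : \dim (fullv : {vspace vec}) = n.
Proof. by rewrite dimvf dim_matrix mul1r. Qed.

Lemma spans_notin_vspace S (U : {vspace vec}) :
  spans S -> (\dim U < n)%N -> exists2 v, S v & v \notin U.
Proof.
move=> spanS dimU.
have [w _ wU] : exists2 w, w \in vbasis fullv & w \notin U.
  apply/allPn; apply: contraTN dimU => /allP basisU.
  rewrite -leqNgt -{1}dimv_full.
  by apply/dimvS; rewrite -(span_basis (vbasisP fullv)); apply/span_subvP.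
have [k [f [a [Sf w_def]]]] := spanS w.
case: (pickP (fun i => f i \notin U)) => [i fiU | fU]; first by exists (f i).
move: wU; rewrite w_def memv_suml // => i _.
by rewrite memvZ //; apply/negPn; rewrite fU.
Qed.

Definition connected_free_in (S : vec -> Prop) (bs : seq vec) :=
  [/\ forall v, v \in bs -> S v, free bs & connected_set (fun v => v \in bs)].

Lemma connected_free_in_extend S bs :
  connected_set S -> spans S -> connected_free_in S bs -> (size bs < n)%N ->
  exists v, connected_free_in S (v :: bs).
Proof.
move=> connS spanS [bsS free_bs conn_bs] small.
have [v Sv v_out] : exists2 v, S v & v \notin <<bs>>%VS.
  by apply: spans_notin_vspace spanS _; rewrite (eqnP free_bs).
case: bs bsS free_bs conn_bs {small} v_out
  => [|b0 bs] bsS free_bs conn_bs v_out.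
  exists v; split; first by move=> u; rewrite inE => /eqP ->.
    by rewrite seq1_free; apply: contraNneq v_out => ->; rewrite mem0v.
  by move=> u w; rewrite !inE => /eqP -> /eqP ->; apply: rt_refl.
have b0_in : b0 \in <<b0 :: bs>>%VS by rewrite memv_span ?mem_head.
have [z [Sz z_out [b b_in bz]]] :=
  reachable_escape (connS _ _ (bsS _ (mem_head _ _)) Sv) b0_in v_out.
have zb : z <> b by move=> zb; rewrite zb memv_span in z_out.
exists z; split.
- by move=> u; rewrite in_cons => /predU1P [-> | /bsS].
- by rewrite free_cons z_out.
- exact: connected_set_cons conn_bs b_in zb bz.
Qed.

Lemma exists_connected_free_in S :
  connected_set S -> spans S ->
  forall k, (k <= n)%N -> exists bs, size bs = k /\ connected_free_in S bs.
Proof.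
move=> connS spanS; elim=> [_ | k IH lt_kn].
  exists [::]; split=> //.
  by split=> [v | | u v]; rewrite ?in_nil //; exact: nil_free.
have [bs [size_bs free_in]] := IH (ltnW lt_kn).
have [|v free_in'] := connected_free_in_extend connS spanS free_in.
  by rewrite size_bs.
by exists (v :: bs); rewrite /= size_bs.
Qed.

Lemma free_lin_indep (bs : seq vec) : free bs -> lin_indep (fun v => v \in bs).
Proof.
move=> free_bs k f a inj_f bs_f sum0.
pose X := [tuple f i | i < k].
have X_nth (i : 'I_k) : X`_i = f i by rewrite -tnth_nth tnth_mktuple.
have /freeP free_X : free X.
  apply: uniq_sub_free free_bs _ _.
    by apply/tuple_uniqP => i j; rewrite !tnth_mktuple => /inj_f.
  by move=> _ /tnthP [i ->]; rewrite tnth_mktuple.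
by apply: free_X; under eq_bigr do rewrite X_nth.
Qed.

Lemma free_size_is_basis (bs : seq vec) :
  free bs -> size bs = n -> is_basis (fun v => v \in bs).
Proof.
move=> free_bs size_bs; split; first exact: free_lin_indep.
have span_full : <<bs>>%VS = fullv.
  by apply/eqP; rewrite eqEdim subvf dimv_full (eqnP free_bs) size_bs leqnn.
move=> w; have w_in : w \in <<in_tuple bs>>%VS by rewrite span_full memvf.
exists (size bs), (fun i => bs`_i), (fun i => coord (in_tuple bs) i w).
by split; [move=> i; rewrite mem_nth | exact: coord_span].
Qed.

Lemma connected_spanning_sub_basis S :
  connected_spanning_set S ->
  exists B : vec -> Prop, (forall v, B v -> S v) /\ connected_basis B.
Proof.
move=> [pureS [connS spanS]].
have [bs [size_bs [bsS free_bs conn_bs]]] :=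
  exists_connected_free_in connS spanS (leqnn n).
exists (fun v => v \in bs); split=> //; split; first by move=> v /bsS /pureS.
by split=> //; exact: free_size_is_basis.
Qed.

Lemma pure_state_reaches_spanning S T x :
  (forall v, T v -> S v) -> spans T -> S x -> pure_state x ->
  exists2 t, T t & reachable S x t.
Proof.
move=> TS spanT Sx pure_x.
have [k [f [a [Tf x_def]]]] := spanT x.
have : inner (\sum_i a i *: f i) x != 0 by rewrite -x_def pure_x oner_neq0.
move=> /inner_sum_neq0 [i fi_x]; exists (f i) => //.
have [<- | x_fi] := eqVneq x (f i); first exact: rt_refl.
apply: rt_step; do !split=> //; first exact: TS.
  exact/eqP.
by apply/eqP; rewrite inner_eq0C.
Qed.

Lemma connected_spanning_super S :
  set_of_pure_states S ->
  (exists T : vec -> Prop, (forall v, T v -> S v) /\ connected_spanning_set T) ->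
  connected_spanning_set S.
Proof.
move=> pureS [T [TS [_ [connT spanT]]]].
have reach x : S x -> exists2 t, T t & reachable S x t.
  by move=> Sx; apply: pure_state_reaches_spanning TS spanT Sx (pureS x Sx).
split=> //; split.
- move=> u v Su Sv.
  have [tu Tu u_tu] := reach u Su; have [tv Tv v_tv] := reach v Sv.
  apply: rt_trans u_tu _; apply: rt_trans (reachable_sym v_tv).
  exact: reachable_sub TS (connT _ _ Tu Tv).
- move=> w; have [k [f [a [Tf w_def]]]] := spanT w.
  by exists k, f, a; split=> // i; apply: TS.
Qed.

End ConnectedBasis.

Theorem lemma5 (C : numClosedFieldType) (n : nat) :
  (forall S : 'rV[C]_n -> Prop,
     connected_spanning_set S ->
     exists B : 'rV[C]_n -> Prop,
       (forall v, B v -> S v) /\ connected_basis B) /\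
  (forall S : 'rV[C]_n -> Prop,
     set_of_pure_states S ->
     (exists T : 'rV[C]_n -> Prop,
        (forall v, T v -> S v) /\ connected_spanning_set T) ->
     connected_spanning_set S).
Proof.
split; [exact: connected_spanning_sub_basis | exact: connected_spanning_super].
Qed.
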